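(* Let $\mathcal{X}$ be a pospace. Then the trace poset $\overrightarrow{T}\mathcal{X}$ (the set of traces of $\mathcal{X}$ ordered by $f\leq g$ iff $g=u\star f\star v$ for some traces $u,v$), regarded as a category, is isomorphic to the factorization category $F\overrightarrow{P}(\mathcal{X})$ of the trace category of $\mathcal{X}$.
   Context: A pospace is a Hausdorff space $X$ with a partial order closed in $X\times X$, regarded as a directed space whose dipaths are the continuous order-preserving maps $[0,1]\to X$. A trace is a dipath modulo monotone (continuous, endpoint-preserving) reparametrization; $\star$ is concatenation of traces. The trace category $\overrightarrow{P}(\mathcal{X})$ has objects the points of $X$ and morphisms the traces, composed by concatenation. For a category $\mathcal{C}$, the factorization category $F\mathcal{C}$ has objects the morphisms of $\mathcal{C}$, a morphism from $f$ to $f'$ being a pair $(u,v)$ of morphisms of $\mathcal{C}$ with $ufv=f'$, with composition $(u,v)(u',v')=(u'u,vv')$ and identities $(1_x,1_y)$. A poset is viewed as a category with exactly one morphism $a\to b$ iff $a\le b$. *)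

From HB Require Import structures.
From mathcomp Require Import all_boot all_order all_algebra all_classical all_reals all_analysis.
From mathcomp Require Import Rstruct Rstruct_topology.
From Stdlib Require Import Relations.
From mathcomp Require Import lra.

Set Implicit Arguments.
Unset Strict Implicit.
Unset Printing Implicit Defensive.
Import Order.TTheory GRing.Theory Num.Theory.
Local Open Scope classical_set_scope.
Local Open Scope ring_scope.

Notation RR := Rdefinitions.R.

Record cat := Cat {
  ob : Type;
  hom : ob -> ob -> Type;
  idm : forall a, hom a a;
  (* comp g f = "g after f" *)
  comp : forall a b c, hom b c -> hom a b -> hom a c }.
Arguments idm {_} _.
Arguments comp {_ _ _ _} _ _.

Definition cat_laws (C : cat) : Prop :=
  [/\ (forall (a b : ob C) (f : hom a b), comp (idm b) f = f),
      (forall (a b : ob C) (f : hom a b), comp f (idm a) = f) &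
      (forall (a b c d : ob C) (h : hom c d) (g : hom b c) (f : hom a b),
          comp h (comp g f) = comp (comp h g) f)].

Definition cat_iso (C D : cat) : Prop :=
  exists (Fo : ob C -> ob D) (Fm : forall a b, hom a b -> hom (Fo a) (Fo b)),
    [/\ (forall a : ob C, Fm a a (idm a) = idm (Fo a)),
        (forall (a b c : ob C) (g : hom b c) (f : hom a b),
            Fm a c (comp g f) = comp (Fm b c g) (Fm a b f)),
        bijective Fo &
        (forall a b : ob C, bijective (Fm a b))].

(* A preorder regarded as a category: exactly one morphism a -> b iff a <= b *)
(* (morphisms are proofs of a <= b; unique by proof irrelevance).          *)
Definition thin_cat (A : Type) (le : A -> A -> Prop)
  (Hr : forall a, le a a) (Ht : forall a b c, le a b -> le b c -> le a c) : cat :=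
  @Cat A le Hr (fun a b c (g : le b c) (f : le a b) => Ht a b c f g).

Definition arrow (C : cat) := {a : ob C & {b : ob C & hom a b}}.
Definition asrc C (f : arrow C) : ob C := projT1 f.
Definition atgt C (f : arrow C) : ob C := projT1 (projT2 f).
Definition aarr C (f : arrow C) : hom (asrc f) (atgt f) := projT2 (projT2 f).

Definition fhom (C : cat) (f f' : arrow C) : Type :=
  {uv : hom (atgt f) (atgt f') * hom (asrc f') (asrc f) |
     comp uv.1 (comp (aarr f) uv.2) = aarr f'}.

Section FactCat.
Variables (C : cat) (HL : cat_laws C).

Definition fidm (f : arrow C) : fhom f f.
Proof.
exists (idm (atgt f), idm (asrc f)) => /=.
by case: HL => H1 H2 _; rewrite H2 H1.
Defined.

Definition fcomp (f f' f'' : arrow C) (G : fhom f' f'') (H : fhom f f') : fhom f f''.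
Proof.
case: G => [[u v] /= Euv]; case: H => [[u' v'] /= Eu'v'].
exists (comp u u', comp v' v) => /=.
case: HL => _ _ A.
by rewrite -A -Euv -Eu'v' !A.
Defined.

Definition fact_cat : cat := @Cat (arrow C) (@fhom C) fidm fcomp.
End FactCat.

Definition is_pospace (T : topologicalType) (le : T -> T -> Prop) : Prop :=
  [/\ hausdorff_space T,
      (forall x, le x x),
      (forall x y z, le x y -> le y z -> le x z),
      (forall x y, le x y -> le y x -> x = y) &
      closed [set xy : T * T | le xy.1 xy.2]].

Section Traces.
Variables (T : topologicalType) (le : T -> T -> Prop).

(* a dipath: a continuous order-preserving map [0,1] -> X (represented by *)
(* a function RR -> T; only its values on [0,1] matter)                  *)
Definition dipath (p : RR -> T) : Prop :=
  {within `[0, 1], continuous p} /\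
  (forall s t : RR, 0 <= s -> s <= t -> t <= 1 -> le (p s) (p t)).

Definition reparam_map (phi : RR -> RR) : Prop :=
  [/\ {within `[0, 1], continuous phi}, phi 0 = 0, phi 1 = 1 &
      (forall s t : RR, 0 <= s -> s <= t -> t <= 1 -> phi s <= phi t)].

Definition reparam_step (p q : RR -> T) : Prop :=
  dipath p /\ dipath q /\
  exists phi, reparam_map phi /\ (forall t : RR, 0 <= t -> t <= 1 -> q t = p (phi t)).

Definition trace_equiv : (RR -> T) -> (RR -> T) -> Prop :=
  clos_refl_sym_trans (RR -> T) reparam_step.

Definition tclass (x y : T) (p : RR -> T) : set (RR -> T) :=
  [set q | [/\ dipath q, q 0 = x, q 1 = y & trace_equiv p q]].

Definition Trace (x y : T) : Type :=
  {S : set (RR -> T) | exists p, [/\ dipath p, p 0 = x, p 1 = y & S = tclass x y p]}.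

Definition trep x y (f : Trace x y) : RR -> T := projT1 (cid (svalP f)).
Lemma trepP x y (f : Trace x y) :
  [/\ dipath (trep f), trep f 0 = x, trep f 1 = y & sval f = tclass x y (trep f)].
Proof. exact: (projT2 (cid (svalP f))). Qed.

Definition pconcat (p q : RR -> T) : RR -> T :=
  fun t => if t <= 2^-1 then p (2 * t) else q (2 * t - 1).
Definition cstp (x : T) : RR -> T := fun _ => x.

(* closure facts needed for the trace category to be well-typed *)
Definition dipath_closure : Prop :=
  (forall x, dipath (cstp x)) /\
  (forall p q, dipath p -> dipath q -> p 1 = q 0 -> dipath (pconcat p q)).

Lemma pconcat0 p q : pconcat p q 0 = p 0.
Proof. by rewrite /pconcat invr_ge0 ler0n mulr0. Qed.
Lemma pconcat1 p q : pconcat p q 1 = q 1.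
Proof.
rewrite /pconcat ifF; first by rewrite mulr1 (_ : 2 - 1 = 1) //; lra.
by apply/negbTE; rewrite -ltNge; lra.
Qed.

Variable Hc : dipath_closure.

Definition tid (x : T) : Trace x x.
Proof.
exists (tclass x x (cstp x)); exists (cstp x); split => //.
exact: Hc.1.
Defined.

(* trace concatenation f * g, written categorically as  tcomp g f *)
Definition tcomp (x y z : T) (g : Trace y z) (f : Trace x y) : Trace x z.
Proof.
exists (tclass x z (pconcat (trep f) (trep g))).
exists (pconcat (trep f) (trep g)).
case: (trepP f) => Hf f0 f1 _; case: (trepP g) => Hg g0 g1 _.
split => //; last by rewrite pconcat1.
  by apply: Hc.2 => //; rewrite f1 g0.
by rewrite pconcat0.
Defined.

Definition trace_cat : cat := @Cat T Trace tid tcomp.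

Definition trace := arrow trace_cat.

Definition trace_le (f g : trace) : Prop :=
  exists (x' y' : T) (u : Trace x' (asrc f)) (v : Trace (atgt f) y'),
    g = existT _ x' (existT _ y' (tcomp v (tcomp (aarr f) u))).

End Traces.

From Pilot Require Import Defs.
From HB Require Import structures.
From mathcomp Require Import all_boot all_order all_algebra all_classical all_reals all_analysis.
From mathcomp Require Import Rstruct Rstruct_topology.
From Stdlib Require Import Relations.
From mathcomp Require Import lra.

Set Implicit Arguments.
Unset Strict Implicit.
Unset Printing Implicit Defensive.
Import Order.TTheory GRing.Theory Num.Theory.
Local Open Scope classical_set_scope.
Local Open Scope ring_scope.

(* Along a dipath of a pospace the order only increases, so every point of a
   trace from x to y lies between x and y.  In particular a trace from x to x
   is constant, which makes the trace order antisymmetric.  It also makes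
   factorizations unique, so that F P(X) is thin: if u f v = u' f v', the points
   of u lie below the source of f while those of f v' lie above it, so the image
   of u is contained in that of u' (symmetrically for v).  Finally, dipaths p, q
   with the same endpoints and im p included in im q have the same trace: with
   h(s) the first time q reaches p(s), the maps sigma(l) = sup {s | s + h(s) <= 2 l}
   and tau(l) = 2 l - sigma(l) are reparametrizations, and closedness of the
   order gives p o sigma = q o tau. *)

(* Continuity of the restriction to [a, b], in a form that composes and glues
   without changing topologies; see [cont_onP]. *)
Definition cont_on (T : topologicalType) (f : RR -> T) (a b : RR) : Prop :=
  forall x, a <= x -> x <= b -> forall U, nbhs (f x) U ->
  exists2 d : RR, 0 < d & forall y, a <= y -> y <= b -> `|y - x| < d -> U (f y).

Section IntervalContinuity.
Variable T : topologicalType.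
Implicit Types (f g : RR -> T) (a b c : RR).

Lemma cont_onP f a b : cont_on f a b <-> {within `[a, b], continuous f}.
Proof.
split=> [H|/subspace_continuousP H].
  apply/subspace_continuousP => x; rewrite /= in_itv /= => /andP [ax xb] U HU.
  have [e e0 He] := H x ax xb U HU.
  rewrite /= nbhs_simpl /within /=; apply/nbhs_ballP; exists e => // y.
  rewrite /ball /= => xy; rewrite in_itv /= => /andP [ay yb].
  by apply: He => //; rewrite distrC.
move=> x ax xb U HU.
have := H x _ U HU; rewrite /= in_itv /= ax xb => /(_ isT).
rewrite /= nbhs_simpl /within /= => /nbhs_ballP [e e0 He].
exists e => // y ay yb xy; apply: He; last by rewrite /= in_itv /= ay yb.
by rewrite /ball /= distrC.
Qed.

Lemma cont_on_ext f g a b : cont_on f a b ->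
  (forall t, a <= t -> t <= b -> f t = g t) -> cont_on g a b.
Proof.
move=> H E x ax xb U; rewrite -E // => /(H x ax xb) [d d0 Hd].
by exists d => // y ay yb yx; rewrite -E //; apply: Hd.
Qed.

Lemma cont_on_cst (z : T) a b : cont_on (fun _ => z) a b.
Proof. by move=> x _ _ U /nbhs_singleton Uz; exists 1. Qed.

Lemma cont_on_glue f a c b : a <= c -> c <= b ->
  cont_on f a c -> cont_on f c b -> cont_on f a b.
Proof.
move=> ac cb Hl Hr x ax xb U HU.
have [d1 d1_gt0 D1] : exists2 d1 : RR, 0 < d1 &
    forall y, a <= y -> y <= c -> `|y - x| < d1 -> U (f y).
  have [xc|cx] := leP x c; first exact: Hl.
  exists (x - c); first by rewrite subr_gt0.
  by move=> y ay yc; rewrite ltr_norml => /andP [? ?]; lra.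
have [d2 d2_gt0 D2] : exists2 d2 : RR, 0 < d2 &
    forall y, c <= y -> y <= b -> `|y - x| < d2 -> U (f y).
  have [cx|xc] := leP c x; first exact: Hr.
  exists (c - x); first by rewrite subr_gt0.
  by move=> y cy yb; rewrite ltr_norml => /andP [? ?]; lra.
exists (Num.min d1 d2); first by rewrite lt_min d1_gt0 d2_gt0.
move=> y ay yb; rewrite lt_min => /andP [y1 y2].
by have [yc|cy] := leP y c; [apply: D1 | apply: D2 => //; apply: ltW].
Qed.

Lemma cont_on_if f g a c b : a <= c -> c <= b ->
  cont_on f a c -> cont_on g c b -> f c = g c ->
  cont_on (fun t => if t <= c then f t else g t) a b.
Proof.
move=> ac cb Hf Hg fg; apply: (cont_on_glue ac cb).
  by apply: (cont_on_ext Hf) => t _ ->.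
apply: (cont_on_ext Hg) => t ct _; have [tc|//] := leP t c.
by have -> : t = c by apply/eqP; rewrite eq_le tc ct.
Qed.
End IntervalContinuity.

Lemma cont_on_comp (T : topologicalType) (p : RR -> T) (phi : RR -> RR) a b c d :
  cont_on p a b -> cont_on phi c d ->
  (forall t, c <= t -> t <= d -> a <= phi t <= b) ->
  cont_on (fun t => p (phi t)) c d.
Proof.
move=> Hp Hphi Hm x cx xd U HU.
have /andP [ax xb] := Hm x cx xd.
have [e e_gt0 He] := Hp _ ax xb U HU.
have Hball : nbhs (phi x) (fun z : RR => `|z - phi x| < e).
  by apply/nbhs_ballP; exists e => // z; rewrite /ball /= distrC.
have [d' d'_gt0 Hd] := Hphi x cx xd _ Hball.
exists d' => // y cy yd yx; have /andP [ay yb] := Hm y cy yd.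
by apply: He => //; apply: Hd.
Qed.

Lemma cont_on_lipschitz (phi : RR -> RR) (K a b : RR) : 0 <= K ->
  (forall s t, a <= s -> s <= b -> a <= t -> t <= b ->
     `|phi s - phi t| <= K * `|s - t|) ->
  cont_on phi a b.
Proof.
move=> K_ge0 HK x ax xb U /nbhs_ballP [e /= e_gt0 He].
have K1_gt0 : 0 < K + 1 by lra.
exists (e / (K + 1)); first exact: divr_gt0.
move=> y ay yb yx; apply: He; rewrite /ball /= distrC.
apply: le_lt_trans (HK y x ay yb ax xb) _.
apply: le_lt_trans (_ : K * (e / (K + 1)) < e).
  by apply: ler_wpM2l => //; apply: ltW.
by rewrite mulrA ltr_pdivrMr // mulrDr mulr1 (mulrC e) ltrDl.
Qed.

Lemma cont_on_affine (al be a b : RR) : cont_on (fun t => al * t + be) a b.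
Proof.
apply: (@cont_on_lipschitz _ `|al|) => // s t _ _ _ _.
by rewrite opprD addrACA subrr addr0 -mulrBr normrM.
Qed.

Lemma cont_on_mono_slope (phi : RR -> RR) (K a b : RR) : 0 <= K ->
  (forall s t, a <= s -> s <= t -> t <= b -> phi s <= phi t <= phi s + K * (t - s)) ->
  cont_on phi a b.
Proof.
move=> K_ge0 Hphi; apply: (cont_on_lipschitz K_ge0) => s t.
wlog st : s t / s <= t => [W sa sb ta tb|sa _ _ tb].
  have [st|ts] := leP s t; first exact: W.
  by rewrite distrC (distrC s); apply: W => //; apply: ltW.
have /andP [h1 h2] := Hphi s t sa st tb.
by rewrite distrC ger0_norm ?subr_ge0 // distrC ger0_norm ?subr_ge0 // lerBlDl.
Qed.

Lemma cont_on_scale (al a b : RR) : cont_on (fun t => al * t) a b.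
Proof. by apply: (cont_on_ext (@cont_on_affine al 0 a b)) => t _ _; rewrite addr0. Qed.

Section Dipaths.
Variables (T : topologicalType) (le : T -> T -> Prop) (le_pre : preorder T le).

Lemma dipath_cont (p : RR -> T) : dipath le p -> cont_on p 0 1.
Proof. by case=> /cont_onP. Qed.

Lemma dipath_cstp x : dipath le (cstp x).
Proof.
split; first by apply/cont_onP; apply: cont_on_cst.
by move=> *; apply: preord_refl.
Qed.

Lemma dipath_pconcat p q : dipath le p -> dipath le q -> p 1 = q 0 ->
  dipath le (pconcat p q).
Proof.
move=> [/cont_onP Cp Mp] [/cont_onP Cq Mq] pq; split.
  apply/cont_onP; apply: cont_on_if; [lra | lra | | | ].
  - by apply: (cont_on_comp Cp) => [|t *]; [exact: cont_on_scale | lra].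
  - by apply: (cont_on_comp Cq) => [|t *]; [exact: cont_on_affine | lra].
  - have -> : 2 / 2 = 1 :> RR by lra.
    by rewrite subrr.
move=> s t s0 st t1; rewrite /pconcat.
have [ht|ht] := leP t 2^-1; first by rewrite (le_trans st ht); apply: Mp; lra.
have [hs|hs] := leP s 2^-1; last by apply: Mq; lra.
apply: (preord_trans _ _ le_pre _ (p 1)); first by apply: Mp; lra.
by rewrite pq; apply: Mq; lra.
Qed.

Lemma dipath_closureP : dipath_closure le.
Proof. by split; [exact: dipath_cstp | exact: dipath_pconcat]. Qed.
End Dipaths.

Lemma pospace_preorder (T : topologicalType) (le : T -> T -> Prop) :
  is_pospace le -> preorder T le.
Proof. by case=> _ le_refl le_trans _ _; split. Qed.

Ltac case_ifs := repeat match goal with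
  |- context [if ?a <= ?b then _ else _] => let h := fresh in have [h|h] := leP a b; rewrite /=
  end.

Lemma reparam_range (phi : RR -> RR) t : reparam_map phi -> 0 <= t -> t <= 1 ->
  0 <= phi t <= 1.
Proof.
case=> _ phi0 phi1 Mphi t0 t1; apply/andP; split.
  by rewrite -phi0; apply: Mphi => //; lra.
by rewrite -[X in _ <= X]phi1; apply: Mphi => //; lra.
Qed.

Definition rp_unitr (t : RR) : RR := if t <= 2^-1 then 2 * t else 1.
Definition rp_unitl (t : RR) : RR := if t <= 2^-1 then 0 else 2 * t - 1.
Definition rp_assoc (t : RR) : RR :=
  if t <= 4^-1 then 2 * t else if t <= 2^-1 then t + 4^-1 else (t + 1) / 2.
Definition rp_concatl (phi : RR -> RR) (t : RR) : RR :=
  if t <= 2^-1 then phi (2 * t) / 2 else t.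
Definition rp_concatr (phi : RR -> RR) (t : RR) : RR :=
  if t <= 2^-1 then t else (phi (2 * t - 1) + 1) / 2.

Lemma rp_unitr_map : reparam_map rp_unitr.
Proof.
split; rewrite /rp_unitr.
- apply/cont_onP; apply: cont_on_if; [lra | lra | | | lra].
    exact: cont_on_scale.
  exact: cont_on_cst.
- by case_ifs; lra.
- by case_ifs; lra.
- by move=> s t *; case_ifs; lra.
Qed.

Lemma rp_unitl_map : reparam_map rp_unitl.
Proof.
split; rewrite /rp_unitl.
- apply/cont_onP; apply: cont_on_if; [lra | lra | | | lra].
    exact: cont_on_cst.
  exact: cont_on_affine.
- by case_ifs; lra.
- by case_ifs; lra.
- by move=> s t *; case_ifs; lra.
Qed.

Lemma rp_assoc_map : reparam_map rp_assoc.
Proof.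
split; rewrite /rp_assoc.
- apply/cont_onP; apply: cont_on_if; [lra | lra | exact: cont_on_scale | | by case_ifs; lra].
  apply: cont_on_if; [lra | lra | | | lra].
    by apply: (cont_on_ext (@cont_on_affine 1 4^-1 _ _)) => t _ _; rewrite mul1r.
  by apply: (cont_on_ext (@cont_on_affine 2^-1 2^-1 _ _)) => t _ _; lra.
- by case_ifs; lra.
- by case_ifs; lra.
- by move=> s t *; case_ifs; lra.
Qed.

Lemma rp_concatl_map phi : reparam_map phi -> reparam_map (rp_concatl phi).
Proof.
move=> Hphi; have Rphi := reparam_range Hphi.
case: Hphi => /cont_onP Cphi phi0 phi1 Mphi; split; rewrite /rp_concatl.
- have R2 t : 0 <= t -> t <= 2^-1 -> 0 <= phi (2 * t) <= 1.
    by move=> t0 t1; apply: Rphi; lra.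
  have C2 : cont_on (fun t => phi (2 * t)) 0 2^-1.
    by apply: (cont_on_comp Cphi) => [|t *]; [exact: cont_on_scale | lra].
  apply/cont_onP; apply: cont_on_if; try lra.
  + apply: (cont_on_ext (cont_on_comp (@cont_on_scale 2^-1 0 1) C2 R2)).
    by move=> t *; rewrite mulrC.
  + by apply: (cont_on_ext (@cont_on_scale 1 _ _)) => t *; rewrite mul1r.
  + by rewrite (_ : 2 * 2^-1 = 1) ?phi1 ?mul1r //; lra.
- by case_ifs; rewrite ?mulr0 ?phi0; lra.
- by case_ifs; lra.
- move=> s t s0 st t1; case_ifs.
  + by have := Mphi (2 * s) (2 * t); lra.
  + by have := Rphi (2 * s); lra.
  + by lra.
  + by lra.
Qed.

Lemma rp_concatr_map phi : reparam_map phi -> reparam_map (rp_concatr phi).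
Proof.
move=> Hphi; have Rphi := reparam_range Hphi.
case: Hphi => /cont_onP Cphi phi0 phi1 Mphi; split; rewrite /rp_concatr.
- have R2 t : 2^-1 <= t -> t <= 1 -> 0 <= phi (2 * t - 1) <= 1.
    by move=> t0 t1; apply: Rphi; lra.
  have C2 : cont_on (fun t => phi (2 * t - 1)) 2^-1 1.
    by apply: (cont_on_comp Cphi) => [|t *]; [exact: cont_on_affine | lra].
  apply/cont_onP; apply: cont_on_if; try lra.
  + by apply: (cont_on_ext (@cont_on_scale 1 _ _)) => t *; rewrite mul1r.
  + apply: (cont_on_ext (cont_on_comp (@cont_on_affine 2^-1 2^-1 0 1) C2 R2)).
    by move=> t *; lra.
  + by rewrite (_ : 2 * 2^-1 - 1 = 0) ?phi0; lra.
- by case_ifs; lra.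
- by case_ifs; [lra | rewrite (_ : 2 * 1 - 1 = 1) ?phi1; lra].
- move=> s t s0 st t1; case_ifs.
  + by lra.
  + by have := Rphi (2 * t - 1); lra.
  + by lra.
  + by have := Mphi (2 * s - 1) (2 * t - 1); lra.
Qed.

Section ConcatReparam.
Variable T : topologicalType.
Implicit Types p q : RR -> T.

Lemma pconcat_cstpr p t : 0 <= t -> t <= 1 -> pconcat p (cstp (p 1)) t = p (rp_unitr t).
Proof. by move=> t0 t1; rewrite /pconcat /rp_unitr /cstp; case_ifs. Qed.

Lemma pconcat_cstpl p t : 0 <= t -> t <= 1 -> pconcat (cstp (p 0)) p t = p (rp_unitl t).
Proof. by move=> t0 t1; rewrite /pconcat /rp_unitl /cstp; case_ifs => //; congr p; lra. Qed.

Lemma pconcatA_rp p q r t : 0 <= t -> t <= 1 ->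
  pconcat (pconcat p q) r t = pconcat p (pconcat q r) (rp_assoc t).
Proof.
move=> t0 t1; rewrite /pconcat /rp_assoc.
have [t_le4|t_gt4] := leP t 4^-1; have [t_le2|t_gt2] := leP t 2^-1.
all: by case_ifs; try (exfalso; lra); congr (_ _); lra.
Qed.

Lemma pconcat_rp_concatl p p' q phi : reparam_map phi ->
  (forall t, 0 <= t -> t <= 1 -> p' t = p (phi t)) ->
  forall t, 0 <= t -> t <= 1 -> pconcat p' q t = pconcat p q (rp_concatl phi t).
Proof.
move=> Hphi E t t0 t1; rewrite /pconcat /rp_concatl.
have [h|h] := leP t 2^-1; last by rewrite ifF //; apply/negbTE; rewrite -ltNge.
have /andP [r0 r1] : 0 <= phi (2 * t) <= 1 by apply: reparam_range => //; lra.
rewrite ifT; last lra.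
by rewrite E; [congr p; lra | lra | lra].
Qed.

Lemma pconcat_rp_concatr p q q' phi : reparam_map phi -> p 1 = q 0 ->
  (forall t, 0 <= t -> t <= 1 -> q' t = q (phi t)) ->
  forall t, 0 <= t -> t <= 1 -> pconcat p q' t = pconcat p q (rp_concatr phi t).
Proof.
move=> Hphi pq E t t0 t1; rewrite /pconcat /rp_concatr.
have [h|h] := leP t 2^-1; first by rewrite h.
have /andP [r0 r1] : 0 <= phi (2 * t - 1) <= 1 by apply: reparam_range => //; lra.
rewrite E; [|lra|lra].
have [h2|h2] := leP ((phi (2 * t - 1) + 1) / 2) 2^-1; last by congr q; lra.
have -> : phi (2 * t - 1) = 0 by lra.
by rewrite (_ : 2 * ((0 + 1) / 2) = 1) //; lra.
Qed.
End ConcatReparam.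

Section TraceEquiv.
Variables (T : topologicalType) (le : T -> T -> Prop) (le_pre : preorder T le).
Local Notation te := (trace_equiv le).
Implicit Types p q r : RR -> T.

Lemma trace_equiv_reparam p q phi : dipath le p -> dipath le q -> reparam_map phi ->
  (forall t, 0 <= t -> t <= 1 -> q t = p (phi t)) -> te p q.
Proof. by move=> Hp Hq Hphi E; apply: rst_step; split => //; split => //; exists phi. Qed.

Lemma trace_equiv_ends p q : te p q -> p 0 = q 0 /\ p 1 = q 1.
Proof.
elim=> {p q} [p q [_ [_ [phi [[_ phi0 phi1 _] E]]]]|//|p q _ [-> ->]//|].
  by rewrite !E ?phi0 ?phi1 //; lra.
by move=> p q r _ [-> ->] _ [-> ->].
Qed.

Lemma trace_equiv_pconcat_cstpr p : dipath le p -> te p (pconcat p (cstp (p 1))).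
Proof.
move=> Hp; apply: (trace_equiv_reparam Hp _ rp_unitr_map); last exact: pconcat_cstpr.
by apply: dipath_pconcat (dipath_cstp le_pre _) _.
Qed.

Lemma trace_equiv_pconcat_cstpl p : dipath le p -> te p (pconcat (cstp (p 0)) p).
Proof.
move=> Hp; apply: (trace_equiv_reparam Hp _ rp_unitl_map); last exact: pconcat_cstpl.
exact: dipath_pconcat (dipath_cstp le_pre _) Hp _.
Qed.

Lemma trace_equiv_pconcatA p q r : dipath le p -> dipath le q -> dipath le r ->
  p 1 = q 0 -> q 1 = r 0 -> te (pconcat p (pconcat q r)) (pconcat (pconcat p q) r).
Proof.
move=> Hp Hq Hr pq qr.
have Hp_qr : dipath le (pconcat p (pconcat q r)).
  by apply: (dipath_pconcat le_pre Hp (dipath_pconcat le_pre Hq Hr qr)); rewrite pconcat0.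
have Hpq_r : dipath le (pconcat (pconcat p q) r).
  by apply: (dipath_pconcat le_pre (dipath_pconcat le_pre Hp Hq pq) Hr); rewrite pconcat1.
exact: trace_equiv_reparam Hp_qr Hpq_r rp_assoc_map (@pconcatA_rp _ p q r).
Qed.

Lemma trace_equiv_pconcatl q p p' : dipath le q -> te p p' -> p 1 = q 0 ->
  te (pconcat p q) (pconcat p' q).
Proof.
move=> Hq; elim=> {p p'} [p p' Hpp'|p|p p' Hpp' IH|p1 p2 p3 H12 IH12 _ IH23] pq.
- have [_ p'q] := trace_equiv_ends (rst_step _ _ _ _ Hpp').
  case: Hpp' => Hp [Hp' [phi [Hphi E]]].
  apply: (trace_equiv_reparam _ _ (rp_concatl_map Hphi)).
  + exact: dipath_pconcat.
  + by apply: dipath_pconcat; rewrite -?p'q.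
  + exact: pconcat_rp_concatl.
- exact: rst_refl.
- by apply: rst_sym; apply: IH; have [_ ->] := trace_equiv_ends Hpp'.
- apply: (rst_trans _ _ _ (pconcat p2 q)); first exact: IH12.
  by apply: IH23; have [_ <-] := trace_equiv_ends H12.
Qed.

Lemma trace_equiv_pconcatr p q q' : dipath le p -> te q q' -> p 1 = q 0 ->
  te (pconcat p q) (pconcat p q').
Proof.
move=> Hp; elim=> {q q'} [q q' Hqq'|q|q q' Hqq' IH|q1 q2 q3 H12 IH12 _ IH23] pq.
- have [q'q _] := trace_equiv_ends (rst_step _ _ _ _ Hqq').
  case: Hqq' => Hq [Hq' [phi [Hphi E]]].
  apply: (trace_equiv_reparam _ _ (rp_concatr_map Hphi)).
  + exact: dipath_pconcat.
  + by apply: dipath_pconcat; rewrite -?q'q.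
  + exact: pconcat_rp_concatr.
- exact: rst_refl.
- by apply: rst_sym; apply: IH; have [-> _] := trace_equiv_ends Hqq'.
- apply: (rst_trans _ _ _ (pconcat p q2)); first exact: IH12.
  by apply: IH23; have [<- _] := trace_equiv_ends H12.
Qed.

Lemma tclass_trace_equiv x y p p' : te p p' -> tclass le x y p = tclass le x y p'.
Proof.
move=> Hpp'; apply/funext => r; apply/propext.
split=> -[Hr r0 r1 H]; split=> //; last exact: rst_trans H.
exact: rst_trans (rst_sym _ _ _ _ Hpp') H.
Qed.
End TraceEquiv.

Section TraceCategory.
Variables (T : topologicalType) (le : T -> T -> Prop) (le_pre : preorder T le).
Variable Hc : dipath_closure le.
Local Notation te := (trace_equiv le).

Lemma trep_dipath x y (f : Trace le x y) : dipath le (trep f).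
Proof. by case: (trepP f). Qed.

Lemma trep0 x y (f : Trace le x y) : trep f 0 = x.
Proof. by case: (trepP f). Qed.

Lemma trep1 x y (f : Trace le x y) : trep f 1 = y.
Proof. by case: (trepP f). Qed.

Lemma trace_equiv_trep x y (f : Trace le x y) p :
  sval f = tclass le x y p -> te p (trep f).
Proof.
case: (trepP f) => Hf f0 f1 Ef Epf.
have : tclass le x y (trep f) (trep f) by split => //; apply: rst_refl.
by rewrite -Ef Epf => -[].
Qed.

Lemma trace_eq x y (f g : Trace le x y) : te (trep f) (trep g) -> f = g.
Proof.
move=> Hfg; apply: eq_sig_hprop => [S ? ?|]; first exact: Prop_irrelevance.
by case: (trepP f) (trepP g) => _ _ _ -> [_ _ _ ->]; apply: tclass_trace_equiv.
Qed.

Lemma trep_tcomp x y z (g : Trace le y z) (f : Trace le x y) :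
  te (pconcat (trep f) (trep g)) (trep (tcomp Hc g f)).
Proof. exact: trace_equiv_trep. Qed.

Lemma trep_tid x : te (cstp x) (trep (tid Hc x)).
Proof. exact: trace_equiv_trep. Qed.

Lemma tcomp_idl x y (f : Trace le x y) : tcomp Hc (tid Hc y) f = f.
Proof.
apply: trace_eq; apply: rst_sym.
apply: (rst_trans _ _ _ (pconcat (trep f) (cstp y))).
  by rewrite -[in cstp y](trep1 f); apply: (trace_equiv_pconcat_cstpr le_pre (trep_dipath f)).
apply: rst_trans (trep_tcomp _ _).
by apply: (trace_equiv_pconcatr le_pre (trep_dipath f) (trep_tid y)); rewrite trep1.
Qed.

Lemma tcomp_idr x y (f : Trace le x y) : tcomp Hc f (tid Hc x) = f.
Proof.
apply: trace_eq; apply: rst_sym.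
apply: (rst_trans _ _ _ (pconcat (cstp x) (trep f))).
  by rewrite -[in cstp x](trep0 f); apply: (trace_equiv_pconcat_cstpl le_pre (trep_dipath f)).
apply: rst_trans (trep_tcomp _ _).
by apply: (trace_equiv_pconcatl le_pre (trep_dipath f) (trep_tid x)); rewrite trep0.
Qed.

Lemma tcompA a b c d (h : Trace le c d) (g : Trace le b c) (f : Trace le a b) :
  tcomp Hc h (tcomp Hc g f) = tcomp Hc (tcomp Hc h g) f.
Proof.
have Hf := trep_dipath f; have Hg := trep_dipath g; have Hh := trep_dipath h.
apply: trace_eq.
apply: (rst_trans _ _ _ (pconcat (trep (tcomp Hc g f)) (trep h))).
  exact: rst_sym (trep_tcomp _ _).
apply: (rst_trans _ _ _ (pconcat (pconcat (trep f) (trep g)) (trep h))).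
  apply: (trace_equiv_pconcatl le_pre Hh (rst_sym _ _ _ _ (trep_tcomp _ _))).
  by rewrite trep1 trep0.
apply: (rst_trans _ _ _ (pconcat (trep f) (pconcat (trep g) (trep h)))).
  by apply/rst_sym/(trace_equiv_pconcatA le_pre Hf Hg Hh); rewrite ?trep1 ?trep0.
apply: rst_trans (trep_tcomp _ _).
apply: (trace_equiv_pconcatr le_pre Hf (trep_tcomp _ _)).
by rewrite pconcat0 trep1 trep0.
Qed.

Lemma trace_cat_laws : cat_laws (trace_cat Hc).
Proof. by split=> *; [exact: tcomp_idl | exact: tcomp_idr | exact: tcompA]. Qed.
End TraceCategory.

Section ClosedRelation.
Variables (T : topologicalType) (E : set (T * T)) (closedE : closed E).

Lemma closed_adherent_l (r : RR -> T) a c : cont_on r 0 1 -> 0 <= a -> a <= 1 ->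
  (forall d : RR, 0 < d -> exists t, [/\ 0 <= t, t <= 1, `|t - a| < d & E (r t, c)]) ->
  E (r a, c).
Proof.
move=> Cr a0 a1 H; apply: contrapT => nE.
have : nbhs (r a, c) (~` E) by move: (closed_openC closedE); rewrite openE; apply.
case=> [[P Q]] /= [Pa Qc] PQ.
have [d d_gt0 Hd] := Cr a a0 a1 P Pa.
have [t [t0 t1 ta Et]] := H d d_gt0.
by apply: (PQ (r t, c)) => //; split => /=; [exact: Hd | exact: nbhs_singleton].
Qed.

Lemma closed_adherent_r (r : RR -> T) a c : cont_on r 0 1 -> 0 <= a -> a <= 1 ->
  (forall d : RR, 0 < d -> exists t, [/\ 0 <= t, t <= 1, `|t - a| < d & E (c, r t)]) ->
  E (c, r a).
Proof.
move=> Cr a0 a1 H; apply: contrapT => nE.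
have : nbhs (c, r a) (~` E) by move: (closed_openC closedE); rewrite openE; apply.
case=> [[P Q]] /= [Pc Qa] PQ.
have [d d_gt0 Hd] := Cr a a0 a1 Q Qa.
have [t [t0 t1 ta Et]] := H d d_gt0.
by apply: (PQ (c, r t)) => //; split => /=; [exact: nbhs_singleton | exact: Hd].
Qed.
End ClosedRelation.

Definition path_image (T : topologicalType) (r : RR -> T) : set T :=
  [set z | exists t, [/\ 0 <= t, t <= 1 & r t = z]].

Section PathImage.
Variables (T : topologicalType) (le : T -> T -> Prop).
Implicit Types p q : RR -> T.

Lemma path_image_reparam p phi : reparam_map phi ->
  path_image (p \o phi) = path_image p.
Proof.
move=> Hphi; have Rphi := reparam_range Hphi; case: (Hphi) => Cphi phi0 phi1 _.
apply/seteqP; split=> z [s [s0 s1 <-]].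
  by have /andP [r0 r1] := Rphi s s0 s1; exists (phi s).
have : Num.min (phi 0) (phi 1) <= s <= Num.max (phi 0) (phi 1).
  by rewrite phi0 phi1 (min_l ler01) (max_r ler01) s0 s1.
case/(IVT ler01 Cphi) => c; rewrite in_itv /= => /andP [c0 c1] phi_c.
by exists c; rewrite /= phi_c.
Qed.

Lemma path_image_trace_equiv p q : trace_equiv le p q -> path_image p = path_image q.
Proof.
elim=> {p q} [p q [_ [_ [phi [Hphi E]]]]|//|p q _ -> //|p q r _ -> _ -> //].
rewrite -(path_image_reparam p Hphi).
by apply/seteqP; split=> z [t [t0 t1 <-]]; exists t; rewrite /= E.
Qed.

Lemma path_image_pconcat p q : p 1 = q 0 ->
  path_image (pconcat p q) = path_image p `|` path_image q.
Proof.
move=> pq; apply/seteqP; split=> z.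
  case=> t [t0 t1 <-]; rewrite /pconcat; have [h|h] := leP t 2^-1.
    by left; exists (2 * t); split => //; lra.
  by right; exists (2 * t - 1); split => //; lra.
case=> -[s [s0 s1 <-]].
  exists (s / 2); split; [lra | lra |].
  by rewrite /pconcat ifT; [congr p | ]; lra.
exists ((s + 1) / 2); split; [lra | lra |].
rewrite /pconcat; have [h|h] := leP ((s + 1) / 2) 2^-1; last by congr q; lra.
have -> : s = 0 by lra.
by have -> : 2 * ((0 + 1) / 2) = 1 :> RR by lra.
Qed.
End PathImage.

Section NestedImages.
Variables (T : topologicalType) (le : T -> T -> Prop) (HX : is_pospace le).
Variables (p q : RR -> T) (Hp : dipath le p) (Hq : dipath le q).
Hypothesis sub_pq : path_image p `<=` path_image q.

Let le_refl : forall x, le x x. Proof. by case: HX. Qed.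
Let le_anti : forall x y, le x y -> le y x -> x = y. Proof. by case: HX. Qed.
Let le_closed : closed [set xy : T * T | le xy.1 xy.2]. Proof. by case: HX. Qed.
Let Mp : forall s t, 0 <= s -> s <= t -> t <= 1 -> le (p s) (p t). Proof. by case: Hp. Qed.
Let Mq : forall s t, 0 <= s -> s <= t -> t <= 1 -> le (q s) (q t). Proof. by case: Hq. Qed.

Definition hits s : set RR := [set t | [/\ 0 <= t, t <= 1 & q t = p s]].
Definition first_hit s : RR := inf (hits s).

Lemma hits_neq0 s : 0 <= s -> s <= 1 -> hits s !=set0.
Proof. by move=> s0 s1; have [t Ht] := sub_pq (ex_intro _ s (And3 s0 s1 erefl)); exists t. Qed.

Lemma first_hit_le s t : hits s t -> first_hit s <= t.
Proof. by apply: ge_inf; exists 0 => u []. Qed.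

Lemma first_hit_ge0 s : 0 <= s -> s <= 1 -> 0 <= first_hit s.
Proof. by move=> s0 s1; apply: lb_le_inf; [exact: hits_neq0 | move=> t []]. Qed.

Lemma first_hit_le1 s : 0 <= s -> s <= 1 -> first_hit s <= 1.
Proof.
move=> s0 s1; have [t Ht] := hits_neq0 s0 s1.
by apply: le_trans (first_hit_le Ht) _; case: Ht.
Qed.

(* The infimum is attained because the order is closed and q is continuous. *)
Lemma first_hitP s : 0 <= s -> s <= 1 -> q (first_hit s) = p s.
Proof.
move=> s0 s1; have h0 := first_hit_ge0 s0 s1; have h1 := first_hit_le1 s0 s1.
apply: le_anti.
  have [t Ht] := hits_neq0 s0 s1; have ht := first_hit_le Ht.
  by case: Ht => t0 t1 <-; apply: Mq.
apply: (closed_adherent_r le_closed (dipath_cont Hq) h0 h1) => d d_gt0.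
have hs : has_inf (hits s) by split; [exact: hits_neq0 | exists 0 => u []].
have [t Ht] := inf_adherent d_gt0 hs; rewrite -/(first_hit s) => td.
have ht := first_hit_le Ht; case: Ht => t0 t1 qt.
by exists t; split; rewrite /= ?qt ?ger0_norm //; lra.
Qed.

Lemma first_hit_mono s s' : 0 <= s -> s <= s' -> s' <= 1 -> first_hit s <= first_hit s'.
Proof.
move=> s0 ss' s'1; apply: lb_le_inf; first by apply: hits_neq0; lra.
move=> t [t0 t1 qt]; rewrite leNgt; apply/negP => t_lt.
suff /first_hit_le : hits s t by rewrite leNgt t_lt.
split=> //; apply: le_anti.
  rewrite -(first_hitP s0 (le_trans ss' s'1)); apply: Mq => //; first exact: ltW.
  by apply: first_hit_le1 => //; apply: le_trans s'1.
by rewrite qt; apply: Mp.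
Qed.

Hypotheses (pq0 : p 0 = q 0) (pq1 : p 1 = q 1).

Lemma first_hit0 : first_hit 0 = 0.
Proof.
by apply/eqP; rewrite eq_le first_hit_ge0 // andbT; apply: first_hit_le; split.
Qed.

Definition below l : set RR := [set s | [/\ 0 <= s, s <= 1 & s + first_hit s <= 2 * l]].
Definition sigma l : RR := sup (below l).
Definition tau l : RR := 2 * l - sigma l.

Lemma below0 l : 0 <= l -> below l 0.
Proof. by move=> l0; split; rewrite ?first_hit0 //; lra. Qed.

Lemma has_sup_below l : 0 <= l -> has_sup (below l).
Proof. by move=> l0; split; [exists 0; exact: below0 | exists 1 => s []]. Qed.

Lemma below_le_sigma l s : below l s -> s <= sigma l.
Proof. by apply: ub_le_sup; exists 1 => u []. Qed.

Lemma sigma_le l x : 0 <= l -> (forall s, below l s -> s <= x) -> sigma l <= x.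
Proof. by move=> l0; apply: ge_sup; exists 0; exact: below0. Qed.

Lemma sigma_ge0 l : 0 <= l -> 0 <= sigma l.
Proof. by move=> l0; apply/below_le_sigma/below0. Qed.

Lemma sigma_le1 l : 0 <= l -> sigma l <= 1.
Proof. by move=> l0; apply: sigma_le => // s []. Qed.

Lemma sigma_le_double l : 0 <= l -> sigma l <= 2 * l.
Proof.
move=> l0; apply: sigma_le => // s [s0 s1 hs].
by have := first_hit_ge0 s0 s1; lra.
Qed.

Lemma sigma_ge l : 0 <= l -> l <= 1 -> 2 * l - 1 <= sigma l.
Proof.
move=> l0 l1; have [h|h] := leP (2 * l - 1) 0; first exact: le_trans h (sigma_ge0 l0).
by apply: below_le_sigma; split; try lra; have := @first_hit_le1 (2 * l - 1); lra.
Qed.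

Lemma below_lt_sigma l s : 0 <= l -> 0 <= s -> s < sigma l -> below l s.
Proof.
move=> l0 s0 s_lt; have d_gt0 : 0 < sigma l - s by lra.
have [e [e0 e1 he]] := sup_adherent d_gt0 (has_sup_below l0).
rewrite -/(sigma l) => es; split; [done | lra |].
have se : s <= e by lra.
by have := first_hit_mono s0 se e1; lra.
Qed.

Lemma sigma_lt_above l s : 0 <= l -> s <= 1 -> sigma l < s -> 2 * l < s + first_hit s.
Proof.
move=> l0 s1 s_gt; rewrite ltNge; apply/negP => hs.
have s0 : 0 <= s by have := sigma_ge0 l0; lra.
by have := below_le_sigma (And3 s0 s1 hs); rewrite leNgt s_gt.
Qed.

Lemma sigma_mono_slope l l' : 0 <= l -> l <= l' ->
  sigma l <= sigma l' <= sigma l + 2 * (l' - l).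
Proof.
move=> l0 ll'; apply/andP; split.
  by apply: sigma_le => // s [s0 s1 hs]; apply: below_le_sigma; split => //; lra.
apply: sigma_le => [|s [s0 s1 hs]]; first lra.
have [h|h] := leP (s - 2 * (l' - l)) 0; first by have := sigma_ge0 l0; lra.
have ss : s - 2 * (l' - l) <= s by lra.
suff /below_le_sigma : below l (s - 2 * (l' - l)) by lra.
by split; try lra; have := first_hit_mono (ltW h) ss s1; lra.
Qed.

Lemma sigma_map : reparam_map sigma.
Proof.
split.
- apply/cont_onP; apply: (@cont_on_mono_slope _ 2) => // s t s0 st _.
  exact: sigma_mono_slope.
- by apply/eqP; rewrite eq_le sigma_ge0 // andbT; have := sigma_le_double (lexx 0); lra.
- by apply/eqP; rewrite eq_le sigma_le1 //=; have := sigma_ge ler01 (lexx 1); lra.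
- by move=> s t s0 st _; have /andP [] := sigma_mono_slope s0 st.
Qed.

Lemma tau_map : reparam_map tau.
Proof.
have tau_mono_slope s t : 0 <= s -> s <= t -> tau s <= tau t <= tau s + 2 * (t - s).
  by move=> s0 st; have /andP [] := sigma_mono_slope s0 st; rewrite /tau; lra.
split; rewrite /tau.
- apply/cont_onP; apply: (@cont_on_mono_slope _ 2) => // s t s0 st _.
  exact: tau_mono_slope.
- by have := sigma_ge0 (lexx 0); have := sigma_le_double (lexx 0); lra.
- by have := sigma_le1 ler01; have := sigma_ge ler01 (lexx 1); lra.
- by move=> s t s0 st _; have /andP [] := tau_mono_slope s t s0 st.
Qed.

Lemma first_hit_le_tau l s : 0 <= l -> 0 <= s -> s < sigma l -> first_hit s <= tau l.
Proof.
move=> l0 s0 s_lt; apply/ler_addgt0Pr => e e_gt0.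
have [s' [ss' s'_lt s'_ge]] : exists s', [/\ s <= s', s' < sigma l & sigma l - e <= s'].
  by have [h|h] := leP s (sigma l - e); [exists (sigma l - e) | exists s]; split; lra.
have s'0 : 0 <= s' by lra.
have [_ s'1 hs'] := below_lt_sigma l0 s'0 s'_lt.
by have := first_hit_mono s0 ss' s'1; rewrite /tau; lra.
Qed.

Lemma tau_le_first_hit l s : 0 <= l -> s <= 1 -> sigma l < s -> tau l <= first_hit s.
Proof.
move=> l0 s1 s_gt; apply/ler_addgt0Pr => e e_gt0.
have [s' [s's s'_gt s'_le]] : exists s', [/\ s' <= s, sigma l < s' & s' <= sigma l + e].
  by have [h|h] := leP (sigma l + e) s; [exists (sigma l + e) | exists s]; split; lra.
have s'0 : 0 <= s' by have := sigma_ge0 l0; lra.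
have := sigma_lt_above l0 (le_trans s's s1) s'_gt.
by have := first_hit_mono s'0 s's s1; rewrite /tau; lra.
Qed.

Lemma p_sigma_le_q_tau l : 0 <= l -> l <= 1 -> le (p (sigma l)) (q (tau l)).
Proof.
move=> l0 l1; have /andP [sig0 sig1] := reparam_range sigma_map l0 l1.
have /andP [tau0 tau1] := reparam_range tau_map l0 l1.
have [sig_le0|sig_gt0] := leP (sigma l) 0.
  by rewrite (_ : sigma l = 0) ?pq0; [apply: Mq | apply/eqP; rewrite eq_le sig_le0].
apply: (closed_adherent_l le_closed (dipath_cont Hp) sig0 sig1) => d d_gt0.
have [s [s0 s_lt sd]] : exists s, [/\ 0 <= s, s < sigma l & sigma l - s < d].
  by have [h|h] := leP d (sigma l); [exists (sigma l - d / 2) | exists (sigma l / 2)];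
    split; lra.
have s1 : s <= 1 by lra.
exists s; split => //; first by rewrite ltr0_norm; lra.
rewrite /= -(first_hitP s0 s1); apply: Mq => //; first exact: first_hit_ge0.
exact: first_hit_le_tau.
Qed.

Lemma q_tau_le_p_sigma l : 0 <= l -> l <= 1 -> le (q (tau l)) (p (sigma l)).
Proof.
move=> l0 l1; have /andP [sig0 sig1] := reparam_range sigma_map l0 l1.
have /andP [tau0 tau1] := reparam_range tau_map l0 l1.
have [sig_ge1|sig_lt1] := leP 1 (sigma l).
  by rewrite (_ : sigma l = 1) ?pq1; [apply: Mq | apply/eqP; rewrite eq_le sig_ge1 sig1].
apply: (closed_adherent_r le_closed (dipath_cont Hp) sig0 sig1) => d d_gt0.
have [s [s_gt s1 sd]] : exists s, [/\ sigma l < s, s <= 1 & s - sigma l < d].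
  by have [h|h] := leP d (1 - sigma l); [exists (sigma l + d / 2) | exists ((sigma l + 1) / 2)];
    split; lra.
have s0 : 0 <= s by lra.
exists s; split => //; first by rewrite gtr0_norm; lra.
rewrite /= -(first_hitP s0 s1); apply: Mq => //; last exact: first_hit_le1.
exact: tau_le_first_hit.
Qed.

Lemma trace_equiv_of_sub_image : trace_equiv le p q.
Proof.
have [/cont_onP Csigma _ _ Msigma] := sigma_map.
have Rsigma := reparam_range sigma_map.
have Hp_sigma : dipath le (p \o sigma).
  split; first by apply/cont_onP; apply: (cont_on_comp (dipath_cont Hp) Csigma).
  move=> s t s0 st t1; have /andP [sig_s0 _] := Rsigma s s0 (le_trans st t1).
  have /andP [_ sig_t1] := Rsigma t (le_trans s0 st) t1.
  by apply: Mp => //; apply: Msigma.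
apply: (rst_trans _ _ _ (p \o sigma)).
  exact: (trace_equiv_reparam Hp Hp_sigma sigma_map (fun _ _ _ => erefl)).
apply: rst_sym; apply: (trace_equiv_reparam Hq Hp_sigma tau_map).
by move=> t t0 t1; apply: le_anti; [apply: p_sigma_le_q_tau | apply: q_tau_le_p_sigma].
Qed.
End NestedImages.

Section TraceFactorization.
Variables (T : topologicalType) (le : T -> T -> Prop) (HX : is_pospace le).
Variable Hc : dipath_closure le.

Let le_pre : preorder T le := pospace_preorder HX.
Let le_anti : forall x y, le x y -> le y x -> x = y. Proof. by case: HX. Qed.

Definition trace_image x y (u : Trace le x y) : set T := path_image (trep u).

Lemma trace_image_tcomp x y z (g : Trace le y z) (f : Trace le x y) :
  trace_image (tcomp Hc g f) = trace_image f `|` trace_image g.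
Proof.
rewrite /trace_image -(path_image_trace_equiv (trep_tcomp Hc g f)).
by rewrite path_image_pconcat // trep1 trep0.
Qed.

Lemma trace_image_bounds x y (u : Trace le x y) z : trace_image u z -> le x z /\ le z y.
Proof.
case=> t [t0 t1 <-]; case: (trep_dipath u) => _ Mu.
split; first by move: (Mu 0 t (lexx 0) t0 t1); rewrite trep0.
by move: (Mu t 1 t0 t1 (lexx 1)); rewrite trep1.
Qed.

Lemma trace_image_src x y (u : Trace le x y) : trace_image u x.
Proof. by exists 0; rewrite trep0; split => //; lra. Qed.

Lemma trace_image_tgt x y (u : Trace le x y) : trace_image u y.
Proof. by exists 1; rewrite trep1; split => //; lra. Qed.

Lemma trace_eq_of_sub_image x y (u u' : Trace le x y) :
  trace_image u `<=` trace_image u' -> u = u'.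
Proof.
move=> sub; apply: trace_eq.
by apply: trace_equiv_of_sub_image; rewrite ?trep0 ?trep1 //; exact: trep_dipath.
Qed.

(* Points of [f] lie below [y] and points of [g] above it, so the images of
   [f] and [g] can only meet at [y]. *)
Lemma tcomp_inj x y z (g g' : Trace le y z) (f f' : Trace le x y) :
  tcomp Hc g f = tcomp Hc g' f' -> f = f' /\ g = g'.
Proof.
move=> E; have img_eq : trace_image f `|` trace_image g = trace_image f' `|` trace_image g'.
  by rewrite -!trace_image_tcomp E.
split; apply: trace_eq_of_sub_image => w.
- move=> wf; have : (trace_image f' `|` trace_image g') w by rewrite -img_eq; left.
  case=> // wg'; rewrite (le_anti (trace_image_bounds wf).2 (trace_image_bounds wg').1).
  exact: trace_image_tgt.
- move=> wg; have : (trace_image f' `|` trace_image g') w by rewrite -img_eq; right.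
  case=> // wf'; rewrite (le_anti (trace_image_bounds wf').2 (trace_image_bounds wg).1).
  exact: trace_image_src.
Qed.

Lemma loop_tid x (u : Trace le x x) : u = tid Hc x.
Proof.
apply: trace_eq_of_sub_image => w /trace_image_bounds [xw wx].
by rewrite (le_anti wx xw); exact: trace_image_src.
Qed.

Lemma trace_ends_le x y (u : Trace le x y) : le x y.
Proof. exact: (trace_image_bounds (trace_image_src u)).2. Qed.

Lemma trace_le_refl (f : trace Hc) : trace_le f f.
Proof.
case: f => [a [b h]]; exists a, b, (tid Hc a), (tid Hc b) => /=.
by rewrite (tcomp_idr le_pre) (tcomp_idl le_pre).
Qed.

Lemma trace_le_trans (f g h : trace Hc) : trace_le f g -> trace_le g h -> trace_le f h.
Proof.
case=> x1 [y1 [u1 [v1 ->]]] [x2 [y2 [u2 [v2 ->]]]] /=.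
by exists x2, y2, (tcomp Hc u1 u2), (tcomp Hc v2 v1); rewrite !(tcompA le_pre).
Qed.

Lemma trace_le_anti (f g : trace Hc) : trace_le f g -> trace_le g f -> f = g.
Proof.
case: f => [a [b h]] [x1 [y1 [u1 [v1 ->]]]] [x2 [y2 [u2 [v2 E]]]] /=.
have ex2 : a = x2 by move: E => /(f_equal (@projT1 _ _)).
have ey2 : b = y2 by move: E => /(f_equal (fun f => projT1 (projT2 f))).
subst x2 y2.
have ex1 : x1 = a := le_anti (trace_ends_le u1) (trace_ends_le u2).
have ey1 : y1 = b := le_anti (trace_ends_le v2) (trace_ends_le v1).
subst x1 y1.
by rewrite (loop_tid u1) (loop_tid v1) (tcomp_idr le_pre) (tcomp_idl le_pre).
Qed.

Lemma fhom_eq (f g : trace Hc) (a b : fhom f g) : a = b.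
Proof.
case: a b => [[v u] /= Ea] [[v' u'] /= Eb].
have [e_fu ev] := tcomp_inj (etrans Ea (esym Eb)).
have [eu _] := tcomp_inj e_fu.
by subst u' v'; congr exist; apply: Prop_irrelevance.
Qed.

Lemma trace_le_fhom (f g : trace Hc) : trace_le f g ->
  exists uv : Defs.hom (atgt f) (atgt g) * Defs.hom (asrc g) (asrc f),
    Defs.comp uv.1 (Defs.comp (aarr f) uv.2) = aarr g.
Proof. by case=> x [y [u [v ->]]]; exists (v, u). Qed.

Lemma fhom_trace_le (f g : trace Hc) : fhom f g -> trace_le f g.
Proof. by case: g => [a [b h]] [[v u]]; rewrite /aarr /= => <-; exists a, b, u, v. Qed.

Lemma thin_trace_le_iso (Hr : forall f : trace Hc, trace_le f f)
    (Ht : forall f g h : trace Hc, trace_le f g -> trace_le g h -> trace_le f h)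
    (HL : cat_laws (trace_cat Hc)) :
  cat_iso (thin_cat Hr Ht) (fact_cat HL).
Proof.
exists id, (fun f g (H : trace_le f g) => cid (trace_le_fhom H) : fhom f g).
split=> [f|f g h u v||f g]; try exact: fhom_eq.
  by exists id.
exists (@fhom_trace_le f g) => [H|a]; [exact: Prop_irrelevance | exact: fhom_eq].
Qed.
End TraceFactorization.

Theorem proposition5p3 (T : topologicalType) (le : T -> T -> Prop)
  (HX : is_pospace le) :
  exists (Hc : dipath_closure le)
         (HL : cat_laws (trace_cat Hc))
         (Hr : forall f : trace Hc, trace_le f f)
         (Ht : forall f g h : trace Hc, trace_le f g -> trace_le g h -> trace_le f h),
    (forall f g : trace Hc, trace_le f g -> trace_le g f -> f = g) /\
    cat_iso (thin_cat Hr Ht) (fact_cat HL).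
Proof.
have le_pre := pospace_preorder HX.
have Hc := dipath_closureP le_pre.
exists Hc, (trace_cat_laws le_pre Hc), (@trace_le_refl _ _ HX Hc), (@trace_le_trans _ _ HX Hc).
by split; [exact: trace_le_anti | exact: thin_trace_le_iso].
Qed.
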